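(* Regard the vertex set of $\Upsilon_{[\mathcal Q^\flat]}$ as $\overline I^{\mathrm{tw},\flat}_\xi$. The quiver of $\widetilde B^{[\mathcal Q^\flat]}$ is obtained from $\Upsilon_{[\mathcal Q^\flat]}$ by the following four operations: - (B1) adding the arrows $(i,r)\to(i,r-2r_i)$ whenever $(i,r),(i,r-2r_i)\in\overline I^{\mathrm{tw},\flat}_\xi$; - (B2) removing all arrows of the form $(n,r)\to(n-1,r+1)$; - (B3) adding the arrows $(n,r)\to(n-1,r+3)$ whenever $(n,r)\in\overline I^{\mathrm{tw},\flat}_\xi$ and $(n-1,r+3)\in(\overline I^{\mathrm{tw},\flat}_\xi)_e$; - (B4) removing the arrows between vertices in $(\overline I^{\mathrm{tw},\flat}_\xi)_f$. More explicitly, the arrow set of the quiver of $\widetilde B^{[\mathcal Q^\flat]}$ is the union of: 1. $\{(i,r)\to(i,r-2r_i)\mid (i,r),(i,r-2r_i)\in\overline I^{\mathrm{tw},\flat}_\xi\}$; 2. $\{(i,r)\to(j,r+2)\mid i,j\le n-1,\ |i-j|=1,\ (i,r)\in\overline I^{\mathrm{tw},\flat}_\xi,\ (j,r+2)\in(\overline I^{\mathrm{tw},\flat}_\xi)_e\}$; 3. $\{(n-1,r)\to(n,r+1)\mid (n-1,r)\in\overline I^{\mathrm{tw},\flat}_\xi,\ (n,r+1)\in(\overline I^{\mathrm{tw},\flat}_\xi)_e\}$; 4. $\{(n,r)\to(n-1,r+3)\mid (n,r)\in\overline I^{\mathrm{tw},\flat}_\xi,\ (n-1,r+3)\in(\overline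 I^{\mathrm{tw},\flat}_\xi)_e\}$.
   Context: Fix $n\ge2$, and put $r_i=2$ for $1\le i\le n-1$ and $r_n=1$. Twisted AR quiver. $\mathcal Q$ is a quiver with underlying graph of type $\mathrm A_{2n-2}$, and $\xi$ a height function ($\xi(j)=\xi(i)+1$ for arrows $i\to j$). Let $\widehat I_\xi=\{(i,p):1\le i\le2n-2,\ p\equiv\xi(i)\ \mathrm{mod}\ 2,\ \xi(2n-1-i)-(2n-1)<p\le\xi(i)\}$, the vertex set of the AR quiver $\Gamma_{\mathcal Q}$, whose arrows are $(j,p-1)\to(i,p)$ for $|i-j|=1$ with both ends in $\widehat I_\xi$. Let $\phi(i,p)=(i,p)$ for $i\le n-1$ and $(i+1,p)$ for $i\ge n$. For $\flat\in\{>,<\}$, $\Upsilon_{[\mathcal Q^\flat]}$ has vertex set $\widehat I^{\mathrm{tw},\flat}_\xi$ consisting of: - $\phi(\widehat I_\xi)$; - a vertex $(n,p-\frac12)$ for each arrow $(j,p-1)\to(i,p)$ of $\Gamma_{\mathcal Q}$ with $\{i,j\}=\{n-1,n\}$; - one extra vertex $(n,r_M+\frac12)$ ($\flat={>}$) or $(n,r_m-\frac12)$ ($\flat={<}$), where $r_M$, $r_m$ are the max and min of $\{p:(n-1,p)\text{ or }(n,p)\in\widehat I_\xi\}$. Its arrows are: - $\phi(j,p-1)\to\phi(i,p)$ for arrows of $\Gamma_{\mathcal Q}$ with $\{i,j\}\ne\{n-1,n\}$; - $\phi(j,p-1)\to(n,p-\frac12)\to\phi(i,p)$ for arrows with $\{i,j\}=\{n-1,n\}$;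 - for $\flat={>}$, $v_M\to(n,r_M+\frac12)$, and for $\flat={<}$, $(n,r_m-\frac12)\to v_m$, where $v_M$ ($v_m$) is the vertex of $\phi(\widehat I_\xi)$ with first coordinate in $\{n-1,n+1\}$ and second coordinate $r_M$ ($r_m$). Vertices are relabelled by $(\imath,s)\mapsto(\imath,2s)$ ($\imath\le n$), $(2n-\imath,2s)$ ($\imath>n$), with image $\overline I^{\mathrm{tw},\flat}_\xi$. The residue of a vertex $(\imath,s)$ is $\imath$. Exchange matrix. Listing the residues of the vertices by decreasing second coordinate $s$ gives a reduced word $(\imath_1,\dots,\imath_\ell)$ of the longest element of $W(\mathrm A_{2n-1})$; positions $k$ are identified with vertices. For a position $k$, $k^+$ is the next position $>k$ with the same letter, or $\ell+1$ if none. Let $J_f=\{k:k^+=\ell+1\}$ and $J_e$ its complement; $(\overline I^{\mathrm{tw},\flat}_\xi)_e$ and $(\overline I^{\mathrm{tw},\flat}_\xi)_f$ are the corresponding vertex subsets. Let $(a_{\imath\jmath})$ be the type $\mathrm A_{2n-1}$ Cartan matrix. $\widetilde B^{[\mathcal Q^\flat]}=(b_{st})_{s\in J,t\in J_e}$ has entries: - $b_{st}=1$ if $t=s^+$; - $b_{st}=a_{\imath_s\imath_t}$ if $s<t<s^+<t^+$; - $b_{st}=-1$ if $t^+=s$; - $b_{st}=-a_{\imath_s\imath_t}$ if $t<s<t^+<s^+$; - $b_{st}=0$ otherwise. Its quiver has vertex set $J$ and an arrow $\beta\to\beta'$ whenever $b_{\beta\beta'}=1$ or $b_{\beta'\beta}=-1$.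 *)

(* CONVENTIONS:
   - vertices are pairs (i, t) : nat * int;  for vertices of Upsilon the
     second component t is TWICE the (half-)integer second coordinate s,
     so that (i, s) is represented by (i, 2 s).  *)
From mathcomp Require Import all_boot all_order all_algebra.
Import Order.TTheory GRing.Theory Num.Theory.

Set Implicit Arguments.
Unset Strict Implicit.
Unset Printing Implicit Defensive.

Local Open Scope ring_scope.

Definition vtx := (nat * int)%type.

Inductive flat := FlatGt | FlatLt.

Section Twisted.
Variables (n : nat) (xi : nat -> int).

(** vertex set \widehat I_xi of the AR quiver Gamma_Q (type A_{2n-2}) *)
Definition hatI (i : nat) (p : int) : Prop :=
  [/\ (1 <= i)%N, (i <= 2 * n - 2)%N, (p == xi i %[mod 2])%Z,
      xi (2 * n - 1 - i)%N - (2 * n - 1)%:Z < p & p <= xi i].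

Definition GammaArrow (j : nat) (q : int) (i : nat) (p : int) : Prop :=
  [/\ q = p - 1, (i = j.+1 \/ j = i.+1), hatI j q & hatI i p].

Definition midpair (i j : nat) : Prop :=
  (i = n.-1 /\ j = n) \/ (i = n /\ j = n.-1).

Definition phi (i : nat) : nat := if (i <= n.-1)%N then i else i.+1.

Definition midS (p : int) : Prop := hatI n.-1 p \/ hatI n p.
Definition isMaxMid (r : int) : Prop := midS r /\ forall p, midS p -> p <= r.
Definition isMinMid (r : int) : Prop := midS r /\ forall p, midS p -> r <= p.

Definition phiV (v : vtx) : Prop := exists i p, hatI i p /\ v = (phi i, 2 * p).

(** vertex set of Upsilon_[Q^flat] (doubled second coordinate) *)
Definition TwV (fl : flat) (v : vtx) : Prop :=
  [\/ phiV v,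
      (exists j i p, [/\ GammaArrow j (p - 1) i p, midpair i j & v = (n, 2 * p - 1)])
    | match fl with
      | FlatGt => exists r, isMaxMid r /\ v = (n, 2 * r + 1)
      | FlatLt => exists r, isMinMid r /\ v = (n, 2 * r - 1)
      end].

Definition TwA (fl : flat) (v w : vtx) : Prop :=
  [\/ (exists j q i p, [/\ GammaArrow j q i p, ~ midpair i j,
                          v = (phi j, 2 * q) & w = (phi i, 2 * p)]),
      (exists j q i p, [/\ GammaArrow j q i p, midpair i j &
          ((v = (phi j, 2 * q) /\ w = (n, 2 * p - 1)) \/
           (v = (n, 2 * p - 1) /\ w = (phi i, 2 * p)))])
    | match fl with
      | FlatGt => exists r, [/\ isMaxMid r, phiV v, (v.1 = n.-1 \/ v.1 = n.+1),
                               v.2 = 2 * r & w = (n, 2 * r + 1)]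
      | FlatLt => exists r, [/\ isMinMid r, phiV w, (w.1 = n.-1 \/ w.1 = n.+1),
                               w.2 = 2 * r & v = (n, 2 * r - 1)]
      end].

Definition relab (v : vtx) : vtx :=
  (if (v.1 <= n)%N then v.1 else (2 * n - v.1)%N, v.2).

Definition Ibar (fl : flat) (v : vtx) : Prop := exists x, TwV fl x /\ relab x = v.

(** a listing of the vertices of Upsilon by decreasing second coordinate
    (ties broken arbitrarily); its residues form the word (i_1,...,i_l) *)
Definition IsListing (fl : flat) (L : seq vtx) : Prop :=
  [/\ uniq L, (forall x, (x \in L) <-> TwV fl x)
    & sorted (fun a b : vtx => b.2 <= a.2) L].

End Twisted.

Section Exchange.
Variable L : seq vtx.

(** positions are 0-based: k < size L;  letter = residue *)
Definition letter (k : nat) : nat := (nth (0%N, 0) L k).1.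

(** k^+ ; "none" is encoded by size L (= l, i.e. l+1 in 1-based terms) *)
Definition nextpos (k : nat) : nat :=
  (k.+1 + find (fun x : vtx => x.1 == letter k) (drop k.+1 L))%N.

Definition inJe (k : nat) : bool := (nextpos k < size L)%N.

Definition cartanA (i j : nat) : int :=
  if i == j then 2 else if (i == j.+1) || (j == i.+1) then -1 else 0.

Definition bmat (s t : nat) : int :=
  if t == nextpos s then 1
  else if [&& (s < t)%N, (t < nextpos s)%N & (nextpos s < nextpos t)%N]
       then cartanA (letter s) (letter t)
  else if nextpos t == s then -1
  else if [&& (t < s)%N, (s < nextpos t)%N & (nextpos t < nextpos s)%N]
       then - cartanA (letter s) (letter t)
  else 0.

(** quiver of B~ (rows J, columns J_e) on positions *)
Definition posArrow (b b' : nat) : Prop :=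
  [/\ (b < size L)%N, (b' < size L)%N &
      ((inJe b' /\ bmat b b' = 1) \/ (inJe b /\ bmat b' b = -1))].

End Exchange.

Section Transport.
Variables (n : nat) (L : seq vtx).

Definition vat (k : nat) : vtx := relab n (nth (0%N, 0) L k).

Definition QB (v w : vtx) : Prop :=
  exists k k', [/\ posArrow L k k', vat k = v & vat k' = w].

Definition Ibar_e (v : vtx) : Prop :=
  exists k, [/\ (k < size L)%N, inJe L k & vat k = v].
Definition Ibar_f (v : vtx) : Prop :=
  exists k, [/\ (k < size L)%N, ~~ inJe L k & vat k = v].

Definition rB (i : nat) : int := if i == n then 1 else 2.

Variables (xi : nat -> int) (fl : flat).

Definition arrB1 (v w : vtx) : Prop :=
  [/\ w.1 = v.1, w.2 = v.2 - 2 * rB v.1, Ibar n xi fl v & Ibar n xi fl w].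
Definition arr2 (v w : vtx) : Prop :=
  [/\ ((v.1 <= n.-1)%N /\ (w.1 <= n.-1)%N), (v.1 = w.1.+1 \/ w.1 = v.1.+1),
      w.2 = v.2 + 2, Ibar n xi fl v & Ibar_e w].
Definition arr3 (v w : vtx) : Prop :=
  [/\ v.1 = n.-1, w = (n, v.2 + 1), Ibar n xi fl v & Ibar_e w].
Definition arrB3 (v w : vtx) : Prop :=
  [/\ v.1 = n, w = (n.-1, v.2 + 3), Ibar n xi fl v & Ibar_e w].

Definition UpsA (v w : vtx) : Prop :=
  exists x y, [/\ TwA n xi fl x y, relab n x = v & relab n y = w].

Definition formB2 (v w : vtx) : Prop := v.1 = n /\ w = (n.-1, v.2 + 1).

Definition ModifiedArrows (v w : vtx) : Prop :=
  (((UpsA v w \/ arrB1 v w) /\ ~ formB2 v w) \/ arrB3 v w)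
  /\ ~ (Ibar_f v /\ Ibar_f w).

Definition ExplicitArrows (v w : vtx) : Prop :=
  [\/ arrB1 v w, arr2 v w, arr3 v w | arrB3 v w].

End Transport.

(* Positions of the reduced word are the vertices of Upsilon listed by decreasing level, so k^+
   is the next vertex of the same residue, one column step 2 r_i lower.  Hence an arrow
   b -> b' of the quiver of B~ is either b' = b^+, giving (B1), or joins adjacent residues with
   b' < b < b'^+ < b^+, a condition on levels alone ([exchange_arrow]).  Doubled levels are even
   off residue n and odd on it, and the height function changes parity between adjacent columns
   of Gamma_Q; so along such an arrow the level rises by 2 between residues off n, by 1 towards n
   and by 3 away from n, and b'^+ exists ([exchange_arrowE]).  The arrows of Upsilon not leaving
   residue n are exactly those rising by 2 or 1; the ones leaving n rise by 1, which is (B2), and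
   those rising by 3 are (B3).  An arrow of Upsilon belongs to the quiver of B~ iff its head is
   mutable, and a mutable tail forces a mutable head ([cross_down]), whence (B4).  Relabelling
   loses nothing since mirror columns k and 2n-k never share a level. *)

From mathcomp Require Import all_boot all_order all_algebra zify.
From Stdlib Require Import Classical ClassicalEpsilon.
Import Order.TTheory GRing.Theory Num.Theory.
Local Open Scope ring_scope.
Set Implicit Arguments.
Unset Strict Implicit.
Unset Printing Implicit Defensive.

Lemma eqz_mod2P (p q : int) : (p == q %[mod 2])%Z <-> exists t : int, p = q + 2 * t.
Proof.
rewrite eqz_mod_dvd; split; first by move/dvdzP=> [k hk]; exists k; lia.
by move=> [t ht]; apply/dvdzP; exists t; lia.
Qed.

Lemma int_parity (z : int) : exists t : int, z = 2 * t \/ z = 2 * t + 1.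
Proof.
exists (z %/ 2)%Z; have := divz_eq z 2; have := modz_ge0 z (isT : (2:int) != 0).
have := ltz_pmod z (isT : (0 < (2:int))); lia.
Qed.

Definition height_fun (n : nat) (xi : nat -> int) : Prop :=
  forall i : nat, (1 <= i)%N -> (i < 2 * n - 2)%N ->
    xi i.+1 = xi i + 1 \/ xi i = xi i.+1 + 1.

Lemma height_fun_of_orientation n xi (orient : nat -> bool) :
  (forall i : nat, (1 <= i)%N -> (i < 2 * n - 2)%N ->
     if orient i then xi i.+1 = xi i + 1 else xi i = xi i.+1 + 1) ->
  height_fun n xi.
Proof. by move=> h i h1 h2; move: (h i h1 h2); case: (orient i); tauto. Qed.

Section HeightFunction.
Variables (n : nat) (xi : nat -> int).
Hypothesis xi_height : height_fun n xi.

Lemma height_step i : (1 <= i)%N -> (i < 2 * n - 2)%N ->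
  xi i.+1 - xi i = 1 \/ xi i.+1 - xi i = -1.
Proof. by move=> h1 h2; case: (xi_height h1 h2); lia. Qed.

Lemma height_from1 i : (1 <= i)%N -> (i <= 2 * n - 2)%N ->
  [/\ exists t : int, xi i = xi 1%N + (i%:Z - 1) + 2 * t,
      xi 1%N - (i%:Z - 1) <= xi i & xi i <= xi 1%N + (i%:Z - 1)].
Proof.
elim: i => [//|i IH] _ hi.
have [->|ip] := posnP i; first by split; [exists 0|..]; lia.
have [[t ht] lo hi'] := IH ip (ltnW hi).
by case: (xi_height ip hi) => e; split; [exists t | | | exists (t - 1) | |]; lia.
Qed.

Lemma height_parity i j : (1 <= i)%N -> (i <= 2 * n - 2)%N ->
  (1 <= j)%N -> (j <= 2 * n - 2)%N ->
  exists t : int, xi i - xi j = i%:Z - j%:Z + 2 * t.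
Proof.
move=> h1 h2 h3 h4.
have [[t1 e1] _ _] := height_from1 h1 h2; have [[t2 e2] _ _] := height_from1 h3 h4.
by exists (t1 - t2); lia.
Qed.

Lemma hatIP i p : hatI n xi i p <->
  [/\ (1 <= i)%N, (i <= 2 * n - 2)%N, (exists t : int, p = xi i + 2 * t),
      xi (2 * n - 1 - i)%N - (2 * n - 1)%:Z < p & p <= xi i].
Proof. by split; case=> h1 h2 h3 h4 h5; split=> //; apply/eqz_mod2P. Qed.

Lemma hatI_range i p : hatI n xi i p -> (1 <= i)%N /\ (i <= 2 * n - 2)%N.
Proof. by case. Qed.

Lemma hatI_parity a b p p' : hatI n xi a p -> hatI n xi b p' ->
  exists t : int, p - p' = a%:Z - b%:Z + 2 * t.
Proof.
move=> /hatIP [a1 a2 [s hs] _ _] /hatIP [b1 b2 [s' hs'] _ _].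
by have [t ht] := height_parity a1 a2 b1 b2; exists (t + s - s'); lia.
Qed.

(* only the lower bound is at stake, and those of adjacent columns differ by one *)
Lemma hatI_down_adjacent j i p : hatI n xi i p -> (i = j.+1 \/ j = i.+1) ->
  hatI n xi j (p - 3) -> hatI n xi i (p - 2).
Proof.
move=> /hatIP [i1 i2 [s hs] i4 i5] ad /hatIP [j1 j2 _ j4 _].
apply/hatIP; split => //; [by exists (s - 1); lia | | lia].
case: ad => e.
- rewrite (_ : (2 * n - 1 - j)%N = (2 * n - 1 - i).+1) in j4; last by lia.
  by have := @height_step (2 * n - 1 - i)%N ltac:(lia) ltac:(lia); lia.
- rewrite (_ : (2 * n - 1 - i)%N = (2 * n - 1 - j).+1); last by lia.
  by have := @height_step (2 * n - 1 - j)%N ltac:(lia) ltac:(lia); lia.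
Qed.

Definition mid_top : int := if xi n.-1 < xi n then xi n else xi n.-1.

Hypothesis hn : (2 <= n)%N.

Lemma hatI_predn p : hatI n xi n.-1 p <->
  (exists t : int, p = xi n.-1 + 2 * t) /\ xi n - (2 * n%:Z - 1) < p /\ p <= xi n.-1.
Proof.
rewrite hatIP (_ : (2 * n - 1 - n.-1)%N = n); last by lia.
by split; [case=> *; split=> //; split=> //; lia | case=> h1 [h2 h3]; split=> //; lia].
Qed.

Lemma hatI_n p : hatI n xi n p <->
  (exists t : int, p = xi n + 2 * t) /\ xi n.-1 - (2 * n%:Z - 1) < p /\ p <= xi n.
Proof.
rewrite hatIP (_ : (2 * n - 1 - n)%N = n.-1); last by lia.
by split; [case=> *; split=> //; split=> //; lia | case=> h1 [h2 h3]; split=> //; lia].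
Qed.

Lemma mid_top_cases :
  (mid_top = xi n /\ xi n.-1 = mid_top - 1) \/ (mid_top = xi n.-1 /\ xi n = mid_top - 1).
Proof.
have := @height_step n.-1 ltac:(lia) ltac:(lia); rewrite prednK; last by lia.
by rewrite /mid_top; case: ltP; lia.
Qed.

(* columns n-1 and n have opposite parities and ranges shifted by one, so they interleave *)
Lemma midSP p : midS n xi p <-> mid_top - (2 * n%:Z - 1) + 1 <= p /\ p <= mid_top.
Proof.
rewrite /midS hatI_predn hatI_n.
have top := mid_top_cases; have [t ht] := int_parity (p - xi n).
split; first by case=> [[[s hs] [h1 h2]]|[[s hs] [h1 h2]]]; lia.
move=> [h1 h2]; case: ht => ht; first by right; split; [exists t|]; lia.
left; split; last by lia.
by case: top => [[e1 e2]|[e1 e2]]; [exists (t + 1) | exists t]; lia.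
Qed.

Lemma isMaxMidE r : isMaxMid n xi r <-> r = mid_top.
Proof.
split; first by case=> /midSP h1 /(_ mid_top); rewrite midSP; lia.
by move=> ->; split=> [|p]; rewrite midSP; lia.
Qed.

Lemma isMinMidE r : isMinMid n xi r <-> r = mid_top - (2 * n%:Z - 1) + 1.
Proof.
split; first by case=> /midSP h1 /(_ (mid_top - (2 * n%:Z - 1) + 1)); rewrite midSP; lia.
by move=> ->; split=> [|p]; rewrite midSP; lia.
Qed.

Lemma midpair_midS j i p : GammaArrow n xi j (p - 1) i p -> midpair n i j ->
  midS n xi (p - 1) /\ midS n xi p.
Proof. by move=> [_ _ h1 h2] [[? ?]|[? ?]]; subst; rewrite /midS; tauto. Qed.

Lemma midS_GammaArrow q : midS n xi q -> midS n xi (q + 1) ->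
  exists j i, GammaArrow n xi j q i (q + 1) /\ midpair n i j.
Proof.
rewrite /midS !hatI_predn !hatI_n.
case=> [[[s hs] h1]|[[s hs] h1]] [[[s' hs'] h2]|[[s' hs'] h2]]; try (exfalso; lia).
- exists n.-1, n; split; last by right.
  split; [lia | left; lia | apply/hatI_predn | apply/hatI_n].
  + by split; [exists s|].
  + by split; [exists s'|].
- exists n, n.-1; split; last by left.
  split; [lia | right; lia | apply/hatI_n | apply/hatI_predn].
  + by split; [exists s|].
  + by split; [exists s'|].
Qed.

End HeightFunction.

Definition adjb (k k' : nat) : bool := (k == k'.+1) || (k' == k.+1).

Lemma adjbP k k' : reflect (k = k'.+1 \/ k' = k.+1) (adjb k k').
Proof. by apply: (iffP orP) => [[/eqP | /eqP] | [-> | ->]]; rewrite ?eqxx ?orbT; auto. Qed.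

Lemma adjbC k k' : adjb k k' = adjb k' k.
Proof. by rewrite /adjb orbC. Qed.

Lemma cartanA_sym i j : cartanA i j = cartanA j i.
Proof. by rewrite /cartanA eq_sym orbC. Qed.

Lemma cartanA_values i j : [\/ cartanA i j = 2, cartanA i j = -1 | cartanA i j = 0].
Proof. by rewrite /cartanA; case: ifP => _; [|case: ifP => _]; constructor. Qed.

Lemma cartanA_eqN1 i j : cartanA i j = -1 <-> adjb i j.
Proof.
rewrite /cartanA /adjb; case: eqP => [->|_]; last by case: ifP.
by rewrite (_ : (j == j.+1) = false) //; lia.
Qed.

(* [bmat] with the positions [k^+] abstracted, making its case analysis linear arithmetic *)
Definition exchange_entry (s t ns nt : nat) (c : int) : int :=
  if t == ns then 1
  else if [&& (s < t)%N, (t < ns)%N & (ns < nt)%N] then c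
  else if nt == s then -1
  else if [&& (t < s)%N, (s < nt)%N & (nt < ns)%N] then - c
  else 0.

Lemma exchange_entry_arrow (l b b' nb nb' : nat) (c : int) :
  (b < nb)%N -> (b' < nb')%N -> (nb <= l)%N -> (nb' <= l)%N ->
  [\/ c = 2, c = -1 | c = 0] ->
  ((nb' < l)%N /\ exchange_entry b b' nb nb' c = 1 \/
   (nb < l)%N /\ exchange_entry b' b nb' nb c = -1) <->
  (b' = nb \/ c = -1 /\ (b' < b)%N /\ (b < nb')%N /\ (nb' < nb)%N).
Proof.
move=> h1 h2 h3 h4 hc; have {hc} hc : c = 2 \/ c = -1 \/ c = 0 by case: hc; tauto.
rewrite /exchange_entry.
case: (b' =P nb) => e1; case: (b =P nb') => e2; case: (nb' =P b) => e3; case: (nb =P b') => e4;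
rewrite ?andbT;
case: (boolP [&& (b < b')%N, (b' < nb)%N & (nb < nb')%N]);
case: (boolP [&& (b' < b)%N, (b < nb')%N & (nb' < nb)%N]) => /=; lia.
Qed.

Section ExchangeQuiver.
Variable L : seq vtx.

Lemma nextpos_gt s : (s < nextpos L s)%N.
Proof. by rewrite /nextpos; lia. Qed.

Lemma nextpos_le s : (s < size L)%N -> (nextpos L s <= size L)%N.
Proof.
move=> hs; rewrite /nextpos.
by have := find_size (fun x : vtx => x.1 == letter L s) (drop s.+1 L); rewrite size_drop; lia.
Qed.

Lemma nextpos_eq s m : (s < m)%N -> (m <= size L)%N ->
  ((m < size L)%N -> letter L m = letter L s) ->
  (forall i, (s < i < m)%N -> letter L i != letter L s) -> nextpos L s = m.
Proof.
move=> hsm hm hlet hbefore; rewrite /nextpos; case: findP => [/hasPn hN | i hi hai hb].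
  rewrite size_drop; case: (ltnP m (size L)) => hm'; last by lia.
  have : nth (0%N, 0) (drop s.+1 L) (m - s.+1) \in drop s.+1 L.
    by apply: mem_nth; rewrite size_drop ltn_sub2rE.
  rewrite nth_drop subnKC // => mem_m.
  by have := hN _ mem_m; rewrite -[(nth _ L m).1]/(letter L m) hlet // eqxx.
rewrite size_drop in hi; have := hai (0%N, 0); rewrite nth_drop /= => /eqP e.
case: (ltngtP (s.+1 + i) m) => // h.
  by case/negP: (hbefore (s.+1 + i)%N ltac:(lia)); apply/eqP.
have hm' : (m < size L)%N by lia.
have := hb (0%N, 0) (m - s.+1)%N ltac:(lia).
by rewrite nth_drop subnKC // -[(nth _ L m).1]/(letter L m) hlet // eqxx.
Qed.

Lemma posArrowP b b' : posArrow L b b' <->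
  [/\ (b < size L)%N, (b' < size L)%N &
     b' = nextpos L b \/ adjb (letter L b) (letter L b') /\ (b' < b)%N /\
                         (b < nextpos L b')%N /\ (nextpos L b' < nextpos L b)%N].
Proof.
have E : bmat L b' b = exchange_entry b' b (nextpos L b') (nextpos L b)
                         (cartanA (letter L b) (letter L b')) by rewrite /bmat cartanA_sym.
have entry h1 h2 := exchange_entry_arrow (nextpos_gt b) (nextpos_gt b')
  (nextpos_le h1) (nextpos_le h2) (cartanA_values (letter L b) (letter L b')).
rewrite /posArrow /inJe E; split=> -[h1 h2 h3]; split=> //; move: h3.
  by move/(entry h1 h2); rewrite cartanA_eqN1.
by rewrite -cartanA_eqN1 => /(entry h1 h2).
Qed.

End ExchangeQuiver.

(* the default element of [nth] in [letter] and [vat], so that rewrite rules match them *)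
Local Notation x0 := (0%N, 0 : int).

Definition listing (P : vtx -> Prop) (L : seq vtx) : Prop :=
  [/\ uniq L, forall x, x \in L <-> P x & sorted (fun a b : vtx => b.2 <= a.2) L].

Definition down (d : nat -> int) (x : vtx) : vtx := (x.1, x.2 - d x.1).

(* [posArrowP] read off the vertices of a listing by decreasing level *)
Definition exchange_arrow (P : vtx -> Prop) (d : nat -> int) (x y : vtx) : Prop :=
  y = down d x \/
  [/\ adjb x.1 y.1, x.2 < y.2, P (down d y), (down d y).2 < x.2 &
      P (down d x) -> (down d x).2 < (down d y).2].

Section Listing.
Variables (P : vtx -> Prop) (d : nat -> int) (L : seq vtx).
Hypothesis L_listing : listing P L.
Hypothesis d_gt0 : forall k, 0 < d k.
Hypothesis column_gap : forall k c c', P (k, c) -> P (k, c') -> c' < c -> c' <= c - d k.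
Hypothesis column_down : forall k c c', P (k, c) -> P (k, c') -> c' < c -> P (k, c - d k).
Hypothesis adjacent_levels : forall k k' c, P (k, c) -> P (k', c) -> ~~ adjb k k'.

Lemma mem_listing x : x \in L <-> P x.
Proof. by case: L_listing. Qed.

Lemma listing_nthP k : (k < size L)%N -> P (nth x0 L k).
Proof. by move=> hk; apply/mem_listing/mem_nth. Qed.

Lemma listing_nth_le i j : (i <= j)%N -> (j < size L)%N -> (nth x0 L j).2 <= (nth x0 L i).2.
Proof.
case: L_listing => _ _ hs hij hj.
have tr : transitive (fun a b : vtx => b.2 <= a.2) by move=> y x z h1 h2; apply: le_trans h2 h1.
have rf : reflexive (fun a b : vtx => b.2 <= a.2) by move=> x; apply: lexx.
by apply: (sorted_leq_nth tr rf x0 hs) => //; rewrite inE; lia.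
Qed.

Lemma listing_index_lt u u' : P u -> P u' -> u'.2 < u.2 -> (index u L < index u' L)%N.
Proof.
move=> /mem_listing hu /mem_listing hu' hlt; rewrite ltnNge; apply/negP => hle.
by have := listing_nth_le hle; rewrite !nth_index // index_mem => /(_ hu); rewrite leNgt hlt.
Qed.

Lemma listing_le_index u u' : P u -> P u' -> (index u L < index u' L)%N -> u'.2 <= u.2.
Proof.
move=> /mem_listing hu /mem_listing hu' hlt.
by have := listing_nth_le (ltnW hlt); rewrite !nth_index // index_mem; exact.
Qed.

Lemma listing_nth_index x : P x -> nth x0 L (index x L) = x.
Proof. by move=> /mem_listing xL; rewrite nth_index. Qed.

Lemma listing_index_nth k : (k < size L)%N -> index (nth x0 L k) L = k.
Proof. by case: L_listing => hu _ _ hk; rewrite index_uniq. Qed.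

(* uniqueness and sortedness put a later vertex of the same column strictly lower *)
Lemma listing_column_below s m : (s < m)%N -> (m < size L)%N ->
  (nth x0 L m).1 = (nth x0 L s).1 ->
  P (nth x0 L m) /\ (nth x0 L m).2 <= (nth x0 L s).2 - d (nth x0 L s).1.
Proof.
move=> hsm hm e; have hs : (s < size L)%N by lia.
have Pm := listing_nthP hm; have Ps := listing_nthP hs; split=> //.
have hle := listing_nth_le (ltnW hsm) hm.
have hne : nth x0 L m != nth x0 L s by case: L_listing => hu _ _; rewrite nth_uniq //; lia.
move: Pm Ps hle hne; case: (nth x0 L m) e => a b; case: (nth x0 L s) => a' b' /= -> Pm Ps hle hne.
apply: column_gap Ps Pm _; rewrite lt_neqAle hle andbT.
by apply: contra hne => /eqP ->.
Qed.

Lemma nextpos_down s : (s < size L)%N -> P (down d (nth x0 L s)) ->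
  nextpos L s = index (down d (nth x0 L s)) L.
Proof.
move=> hs; set x := nth x0 L s; set y := down d x => Py.
have hj : (index y L < size L)%N by rewrite index_mem; apply/mem_listing.
have nj : nth x0 L (index y L) = y := listing_nth_index Py.
apply: nextpos_eq.
- rewrite ltnNge; apply/negP => hjs.
  by have := listing_nth_le hjs hs; rewrite nj /= -/x; have := d_gt0 x.1; lia.
- exact: ltnW.
- by rewrite /letter nj.
move=> i /andP [hsi hij]; apply/eqP => e.
have [_ hb] := listing_column_below hsi (ltn_trans hij hj) e.
have hle := listing_nth_le (ltnW hij) hj.
have e' : (nth x0 L i).1 = x.1 := e.
rewrite nj in hle; rewrite -/x in hb.
have : nth x0 L i = y.
  by move: e' hb hle; rewrite /y /down; case: (nth x0 L i) => a b /= -> h1 h2; congr (_, _); lia.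
by move/(congr1 (index^~ L)); rewrite listing_index_nth ?(ltn_trans hij hj) //; lia.
Qed.

Lemma nextpos_last s : (s < size L)%N -> ~ P (down d (nth x0 L s)) -> nextpos L s = size L.
Proof.
move=> hs hPy; apply: nextpos_eq => // [|i /andP [hsi hi]]; first by lia.
apply/eqP => e; apply: hPy; have [Pi hb] := listing_column_below hsi hi e.
have e' : (nth x0 L i).1 = (nth x0 L s).1 := e.
move: Pi hb e' (listing_nthP hs); rewrite /down; clear e.
case: (nth x0 L i) => a b; case: (nth x0 L s) => a' b' /= Pi hb ea Ps; subst a.
by apply: column_down Ps Pi _; have := d_gt0 a'; lia.
Qed.

Lemma inJe_down s : (s < size L)%N -> inJe L s <-> P (down d (nth x0 L s)).
Proof.
move=> hs; rewrite /inJe; split => [h|hP].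
  by apply: NNPP => hn; move: h; rewrite nextpos_last // ltnn.
by rewrite nextpos_down // index_mem; apply/mem_listing.
Qed.

Lemma Ibar_eP n v : Ibar_e n L v <-> exists x, [/\ P x, P (down d x) & relab n x = v].
Proof.
split=> [[k [hk hJ <-]]|[x [Px Pdx <-]]].
  by exists (nth x0 L k); split; [apply: listing_nthP | apply/inJe_down |].
have hk : (index x L < size L)%N by rewrite index_mem; apply/mem_listing.
exists (index x L); split=> //; last by rewrite /vat listing_nth_index.
by apply/inJe_down; rewrite // listing_nth_index.
Qed.

Lemma Ibar_fP n v : Ibar_f n L v <-> exists x, [/\ P x, ~ P (down d x) & relab n x = v].
Proof.
split=> [[k [hk hJ <-]]|[x [Px Pdx <-]]].
  by exists (nth x0 L k); split=> //; [apply: listing_nthP | move/(inJe_down hk); apply/negP].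
have hk : (index x L < size L)%N by rewrite index_mem; apply/mem_listing.
exists (index x L); split=> //; last by rewrite /vat listing_nth_index.
by apply/negP => /(inJe_down hk); rewrite listing_nth_index.
Qed.

Lemma listing_adjacent_lt u u' : P u -> P u' -> adjb u.1 u'.1 ->
  (index u L < index u' L)%N -> u'.2 < u.2.
Proof.
move=> Pu Pu' ad hlt; rewrite lt_neqAle listing_le_index // andbT.
apply/eqP; case: u Pu ad {hlt} => a b Pu; case: u' Pu' => a' b' Pu' /= ad e; subst b'.
by rewrite (negbTE (adjacent_levels Pu Pu')) in ad.
Qed.

Lemma posArrow_exchange_arrow k k' :
  posArrow L k k' -> exchange_arrow P d (nth x0 L k) (nth x0 L k').
Proof.
case/posArrowP => hk hk'; set x := nth x0 L k; set y := nth x0 L k'.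
have Px : P x := listing_nthP hk; have Py : P y := listing_nthP hk'.
case=> [e | [ad [h1 [h2 h3]]]].
  have Pdx : P (down d x) by apply/(inJe_down hk); rewrite /inJe -e.
  by left; rewrite /y e nextpos_down // listing_nth_index.
have Pdy : P (down d y) by apply/(inJe_down hk'); rewrite /inJe; have := nextpos_le hk; lia.
rewrite nextpos_down // in h2 h3; have {}ad : adjb x.1 y.1 := ad.
have ix : index x L = k := listing_index_nth hk.
have iy : index y L = k' := listing_index_nth hk'.
right; split=> //.
- by apply: (listing_adjacent_lt Py Px); rewrite ?ix ?iy // adjbC.
- by apply: (listing_adjacent_lt Px Pdy); rewrite ?ix.
move=> Pdx; rewrite (nextpos_down hk Pdx) -/x in h3.
by apply: (listing_adjacent_lt Pdy Pdx); rewrite //= adjbC.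
Qed.

Lemma nextpos_index x : P x -> P (down d x) -> nextpos L (index x L) = index (down d x) L.
Proof.
move=> Px Pdx; have hx : (index x L < size L)%N by rewrite index_mem; apply/mem_listing.
by rewrite (nextpos_down hx) ?listing_nth_index.
Qed.

Lemma nextpos_index_last x : P x -> ~ P (down d x) -> nextpos L (index x L) = size L.
Proof.
move=> Px Pdx; have hx : (index x L < size L)%N by rewrite index_mem; apply/mem_listing.
by rewrite (nextpos_last hx) ?listing_nth_index.
Qed.

Lemma exchange_arrow_posArrow x y : P x -> P y -> exchange_arrow P d x y ->
  posArrow L (index x L) (index y L).
Proof.
move=> Px Py har; have hidx u : P u -> (index u L < size L)%N.
  by move=> Pu; rewrite index_mem; apply/mem_listing.
apply/posArrowP; split; try exact: hidx.
rewrite /letter !listing_nth_index //.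
case: har => [e | [ad h1 Pdy h2 h3]].
  by left; rewrite nextpos_index -?e.
right; rewrite nextpos_index //; split=> //; split; first exact: listing_index_lt.
split; first exact: listing_index_lt.
case: (classic (P (down d x))) => Pdx.
  by rewrite nextpos_index //; exact: listing_index_lt Pdy Pdx (h3 Pdx).
by rewrite nextpos_index_last // hidx.
Qed.

Lemma QBP n v w : QB n L v w <->
  exists x y, [/\ P x, P y, relab n x = v, relab n y = w & exchange_arrow P d x y].
Proof.
split=> [[k [k' [har <- <-]]] | [x [y [Px Py <- <- har]]]].
  have /posArrowP [hk hk' _] := har.
  exists (nth x0 L k), (nth x0 L k'); split=> //; try exact: listing_nthP.
  exact: posArrow_exchange_arrow.
by exists (index x L), (index y L); rewrite /vat !listing_nth_index //;
  split=> //; apply: exchange_arrow_posArrow.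
Qed.

End Listing.

Definition unphi (n k : nat) : nat := if (k < n)%N then k else k.-1.

Lemma phiK n i : (1 <= i)%N -> (i <= 2 * n - 2)%N ->
  [/\ unphi n (phi n i) = i, phi n i <> n & (1 <= phi n i <= 2 * n - 1)%N].
Proof.
rewrite /phi /unphi => h1 h2.
by case: (leqP i n.-1) => h; [rewrite ifT | rewrite ifF]; try split; lia.
Qed.

Lemma unphiK n k : k <> n -> (1 <= k)%N -> (k <= 2 * n - 1)%N -> phi n (unphi n k) = k.
Proof.
rewrite /unphi /phi => h1 h2 h3.
by case: (ltnP k n) => h; [rewrite ifT | rewrite ifF]; lia.
Qed.

Lemma phi_neq_n n xi i p : hatI n xi i p -> phi n i <> n.
Proof. by move=> /hatI_range [h1 h2]; have [] := phiK h1 h2. Qed.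

Lemma unphi_adj_n n k : adjb k n -> unphi n k = n.-1 \/ unphi n k = n.
Proof. by move/adjbP; rewrite /unphi; case: ifP => h; lia. Qed.

Lemma midS_adj_n n xi k p : adjb k n -> hatI n xi (unphi n k) p -> midS n xi p.
Proof. by move=> /unphi_adj_n [] ->; rewrite /midS; tauto. Qed.

Definition flat_shift (fl : flat) : int := if fl is FlatGt then 1 else 0.

Lemma flat_shift01 fl : flat_shift fl = 0 \/ flat_shift fl = 1.
Proof. by case: fl; [right | left]. Qed.

(* doubled second coordinates of the vertices of residue n: the midpoints of the arrows between
   columns n-1 and n of Gamma_Q, and the extra vertex above (>) or below (<) them *)
Definition mid_level (n : nat) (xi : nat -> int) (fl : flat) (c : int) : Prop :=
  exists q : int, c = 2 * q + 1 /\
    mid_top n xi - (2 * n%:Z - 1) + flat_shift fl <= q /\ q <= mid_top n xi - 1 + flat_shift fl.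

(* [2 r_i] in doubled coordinates: the distance between consecutive vertices of a column *)
Definition colstep (n k : nat) : int := if k == n then 2 else 4.

Lemma colstep_n n : colstep n n = 2.
Proof. by rewrite /colstep eqxx. Qed.

Lemma colstep_offn n k : k <> n -> colstep n k = 4.
Proof. by rewrite /colstep => /eqP/negbTE ->. Qed.

Section TwistedVertices.
Variables (n : nat) (xi : nat -> int) (fl : flat).
Hypothesis xi_height : height_fun n xi.
Hypothesis hn : (2 <= n)%N.

Local Notation TwV := (TwV n xi fl).

Lemma TwVE k c : TwV (k, c) <->
  (k <> n /\ exists p, c = 2 * p /\ hatI n xi (unphi n k) p) \/ (k = n /\ mid_level n xi fl c).
Proof.
split.
- case=> [[i [p [hI [-> ->]]]] | [j [i [p [hG hm [-> ->]]]]] | ].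
  + have [e phin _] := phiK (hatI_range hI).1 (hatI_range hI).2.
    by left; split=> //; exists p; rewrite e.
  + have [/(midSP xi_height hn) h1 /(midSP xi_height hn) h2] := midpair_midS hG hm.
    by right; split=> //; exists (p - 1); case: fl; rewrite /flat_shift; lia.
  + case: fl => [[r [/(isMaxMidE xi_height hn) -> [-> ->]]]
                | [r [/(isMinMidE xi_height hn) -> [-> ->]]]]; right; split=> //.
      by exists (mid_top n xi); rewrite /flat_shift; lia.
    by exists (mid_top n xi - (2 * n%:Z - 1)); rewrite /flat_shift; lia.
case=> [[kn [p [-> hI]]] | [-> [q [-> hq]]]].
  have [r1 r2] := hatI_range hI.
  have [r1' r2'] : (1 <= k)%N /\ (k <= 2 * n - 1)%N by move: r1 r2; rewrite /unphi; case: ifP; lia.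
  by constructor 1; exists (unphi n k), p; rewrite unphiK.
have [inner | extra] : mid_top n xi - (2 * n%:Z - 1) + 1 <= q /\ q <= mid_top n xi - 1 \/
    q = (if fl is FlatGt then mid_top n xi else mid_top n xi - (2 * n%:Z - 1)).
- by case: fl hq; rewrite /flat_shift; lia.
- have mq : midS n xi q by apply/(midSP xi_height hn); lia.
  have mq1 : midS n xi (q + 1) by apply/(midSP xi_height hn); lia.
  have [j [i [hG hm]]] := midS_GammaArrow hn mq mq1.
  constructor 2; exists j, i, (q + 1); rewrite addrK; split=> //.
  by congr (_, _); lia.
constructor 3; move: extra; case: fl hq => hq ->.
  by exists (mid_top n xi); split; first exact/(isMaxMidE xi_height hn).
exists (mid_top n xi - (2 * n%:Z - 1) + 1); split; first exact/(isMinMidE xi_height hn).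
by congr (_, _); lia.
Qed.

Lemma TwV_offn k c : k <> n ->
  TwV (k, c) <-> exists p, c = 2 * p /\ hatI n xi (unphi n k) p.
Proof. by move=> kn; rewrite TwVE; split=> [[[_ h] | [h _]] | h] //; left. Qed.

Lemma TwV_n c : TwV (n, c) <-> mid_level n xi fl c.
Proof. by rewrite TwVE; split=> [[[h _] | [_ h]] | h] //; right. Qed.

Lemma TwV_phi i p : hatI n xi i p -> TwV (phi n i, 2 * p).
Proof. by move=> hI; constructor 1; exists i, p. Qed.

Lemma TwV_residue k c : TwV (k, c) -> (1 <= k)%N /\ (k <= 2 * n - 1)%N.
Proof.
case/TwVE=> [[kn [p [_ /hatI_range]]] | [-> _]]; last by lia.
by rewrite /unphi; case: ifP; lia.
Qed.

Lemma colstep_gt0 k : 0 < colstep n k.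
Proof. by rewrite /colstep; case: ifP. Qed.

Lemma colstep_rB x : (1 <= x.1)%N -> (x.1 <= 2 * n - 1)%N ->
  colstep n x.1 = 2 * rB n (relab n x).1.
Proof.
case: x => k c; rewrite /colstep /rB /relab /= => h1 h2.
by case: leqP => h; repeat (case: ifP => [/eqP ? | /eqP ?]); lia.
Qed.

Lemma TwV_column_gap k c c' : TwV (k, c) -> TwV (k, c') -> c' < c -> c' <= c - colstep n k.
Proof.
rewrite !TwVE /colstep.
case=> [[kn [p [-> /hatIP [_ _ [t ht] _ _]]]] | [-> [q [-> _]]]];
case=> [[_ [p' [-> /hatIP [_ _ [t' ht'] _ _]]]] | [kn' [q' [-> _]]]] //.
- by rewrite ifF; [lia | exact/eqP].
- by rewrite eqxx; lia.
Qed.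

Lemma TwV_column_down k c c' : TwV (k, c) -> TwV (k, c') -> c' < c -> TwV (k, c - colstep n k).
Proof.
rewrite !TwVE /colstep.
case=> [[kn [p [-> /hatIP [a1 a2 [t ht] a4 a5]]]] | [-> [q [-> [q1 q2]]]]];
case=> [[_ [p' [-> /hatIP [_ _ [t' ht'] b4 b5]]]] | [kn' [q' [-> [q1' q2']]]]] //.
- rewrite ifF; last exact/eqP.
  move=> hlt; left; split=> //; exists (p - 2); split; first by lia.
  by apply/hatIP; split=> //; [exists (t - 1) | ..]; lia.
- by rewrite eqxx => hlt; right; split=> //; exists (q - 1); lia.
Qed.

Lemma TwV_adjacent_levels k k' c : TwV (k, c) -> TwV (k', c) -> ~~ adjb k k'.
Proof.
move=> Px Py; apply/negP => /adjbP ad; move: Px Py; rewrite !TwVE.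
case=> [[kn [p [-> hI]]] | [kn [q [-> _]]]] [[kn' [p' [e hI']]] | [kn' [q' [e _]]]]; try lia.
have [t ht] := hatI_parity xi_height hI hI'; move: ht; rewrite /unphi.
by case: ifP => h; case: ifP => h'; lia.
Qed.

End TwistedVertices.

(* the doubled level difference along an arrow of the quiver of B~ between adjacent residues *)
Definition level_gap (n k k' : nat) : int := if k == n then 3 else if k' == n then 1 else 2.

Definition cross_arrow (n : nat) (x y : vtx) : Prop :=
  adjb x.1 y.1 /\ y.2 = x.2 + level_gap n x.1 y.1.

Lemma level_gap_offn n k k' : k <> n -> k' <> n -> level_gap n k k' = 2.
Proof. by rewrite /level_gap => /eqP/negbTE -> /eqP/negbTE ->. Qed.

Lemma level_gap_to_n n k : k <> n -> level_gap n k n = 1.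
Proof. by rewrite /level_gap eqxx => /eqP/negbTE ->. Qed.

Section TwistedArrows.
Variables (n : nat) (xi : nat -> int) (fl : flat).
Hypothesis xi_height : height_fun n xi.
Hypothesis hn : (2 <= n)%N.

Local Notation TwV := (TwV n xi fl).
Local Notation TwV_offn := (@TwV_offn n xi fl xi_height hn _ _).
Local Notation TwV_n := (@TwV_n n xi fl xi_height hn _).
Local Notation midSP := (midSP xi_height hn).
Local Notation TwV_residue := (TwV_residue xi_height hn).

(* columns k < n < k' of Upsilon come from columns k and k'-1 of Gamma_Q, on which the height
   function has the parity of k - k' + 1 *)
Lemma TwV_sides k k' c c' : TwV (k, c) -> TwV (k', c') -> (k < n)%N -> (n < k')%N ->
  exists t : int, c - c' = 2 * (k%:Z - k'%:Z + 1) + 4 * t.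
Proof.
move=> Px Py hk hk'.
move: Px Py; rewrite !TwV_offn; try lia.
move=> [p [-> hI]] [p' [-> hI']]; move: hI hI'; rewrite /unphi ifT // ifF; last by lia.
move=> hI hI'; have [t ht] := hatI_parity xi_height hI hI'.
by exists t; move: ht; rewrite (_ : (k'.-1)%:Z = k'%:Z - 1); lia.
Qed.

Lemma relab_residue_eq k k' c c' : TwV (k, c) -> TwV (k', c') ->
  (relab n (k, c)).1 = (relab n (k', c')).1 -> (exists t : int, c - c' = 4 * t) -> k = k'.
Proof.
move=> Px Py; have [r1 r2] := TwV_residue Px; have [r1' r2'] := TwV_residue Py.
rewrite /relab /=; case: leqP => h; case: leqP => h' e [t ht]; try lia.
- have [s hs] := TwV_sides Px Py ltac:(lia) ltac:(lia); lia.
- have [s hs] := TwV_sides Py Px ltac:(lia) ltac:(lia); lia.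
Qed.

Lemma relab_TwV_inj x y : TwV x -> TwV y -> relab n x = relab n y -> x = y.
Proof.
case: x y => [k c] [k' c'] Px Py e.
have [e1 e2] : (relab n (k, c)).1 = (relab n (k', c')).1 /\ c = c' by rewrite e; case: e.
by rewrite (relab_residue_eq Px Py e1); [rewrite e2 | exists 0; lia].
Qed.

Lemma exchange_arrow_cross x y : TwV x -> TwV y -> exchange_arrow TwV (colstep n) x y ->
  y = down (colstep n) x \/ cross_arrow n x y /\ TwV (down (colstep n) y).
Proof.
case: x y => [k c] [k' c'] Px Py [-> | [/= ad h1 Pdy h2 h3]]; [by left | right].
split=> //; split=> //=; move: h1 h2 h3 Pdy; rewrite /down /level_gap /colstep /=.
case: (k =P n) => [ek | kn]; case: (k' =P n) => [ek' | kn'].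
- by move/adjbP: ad; lia.
- subst k => h1 h2 h3 Pdy.
  move/TwV_n: Px => [q [ec hq]]; move/(TwV_offn kn'): Py => [p' [ec' _]].
  move/(TwV_offn kn'): Pdy => [p'' [ec'' hI'']].
  have /midSP m'' := midS_adj_n (etrans (adjbC k' n) ad) hI''.
  (* the arrow cannot reach one level up: then the vertex below x would exist and sit too low *)
  have Pdx : c' = c + 1 -> TwV (n, c - 2).
    by move=> e; apply/TwV_n; exists (q - 1); have := flat_shift01 fl; lia.
  have [// | e] : c' = c + 3 \/ c' = c + 1 by lia.
  by have := h3 (Pdx e); lia.
- subst k' => h1 h2 _ _.
  by move/(TwV_offn kn): Px => [p [ec _]]; move/TwV_n: Py => [q [ec' _]]; lia.
move=> h1 h2 _ _.
move/(TwV_offn kn): Px => [p [ec hI]]; move/(TwV_offn kn'): Py => [p' [ec' hI']].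
have [t ht] := hatI_parity xi_height hI hI'.
move: ht ad; rewrite /unphi.
by case: ifP => i1; case: ifP => i2 ht /adjbP ad; lia.
Qed.

Lemma cross_exchange_arrow x y : cross_arrow n x y -> TwV (down (colstep n) y) ->
  exchange_arrow TwV (colstep n) x y.
Proof.
case: x y => [k c] [k' c'] [/= ad ->] Pdy; right; split=> //; move/adjbP: ad;
  rewrite /down /level_gap /colstep /= => ad *; by case: (k =P n); case: (k' =P n); lia.
Qed.

Lemma exchange_arrowE x y : TwV x -> TwV y ->
  exchange_arrow TwV (colstep n) x y <->
  y = down (colstep n) x \/ cross_arrow n x y /\ TwV (down (colstep n) y).
Proof.
move=> Px Py; split; first exact: exchange_arrow_cross.
by case=> [-> | [hc Pdy]]; [left | exact: cross_exchange_arrow].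
Qed.

Local Notation TwA := (TwA n xi fl).

Lemma TwA_vertices x y : TwA x y -> TwV x /\ TwV y.
Proof.
case=> [[j [q [i [p [hG _ -> ->]]]]] | [j [q [i [p [hG hm hxy]]]]] | ].
- by case: hG => _ _ hj hi; split; apply: TwV_phi.
- case: (hG) => eq _ hj hi; subst q.
  have Pm : TwV (n, 2 * p - 1) by constructor 2; exists j, i, p.
  by case: hxy => -[-> ->]; split=> //; apply: TwV_phi.
case: fl => -[r [hr hv _ _ ->]]; split; try by constructor 1.
  by constructor 3; exists r.
by constructor 3; exists r.
Qed.

Lemma TwA_cross x y : TwA x y -> x.1 <> n -> cross_arrow n x y.
Proof.
case=> [[j [q [i [p [[eq ad hj hi] nm -> ->]]]]] | [j [q [i [p [[eq ad hj hi] hm hxy]]]]] | ] /=.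
- have jn := phi_neq_n hj; have i_n := phi_neq_n hi.
  move=> _; split=> /=; last by rewrite level_gap_offn //; lia.
  apply/adjbP; move: nm; rewrite /phi /midpair.
  by case: ifP => h1; case: ifP => h2 nm; lia.
- case: hxy => -[-> ->] //= _; have jmid : j = n.-1 \/ j = n by case: hm => -[_ ->]; [right | left].
  have jn : phi n j <> n by rewrite /phi; case: ifP => h; lia.
  split=> /=; last by rewrite level_gap_to_n //; lia.
  by apply/adjbP; rewrite /phi; case: ifP => h; lia.
case: fl => -[r [_ _ hv1 hv2 ->]] //= xn.
split=> /=; last by rewrite level_gap_to_n //; lia.
by apply/adjbP; lia.
Qed.

Lemma TwA_from_n x y : TwA x y -> x.1 = n -> (y.1 = n.-1 \/ y.1 = n.+1) /\ y.2 = x.2 + 1.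
Proof.
case=> [[j [q [i [p [[eq ad hj hi] nm -> ->]]]]] | [j [q [i [p [[eq ad hj hi] hm hxy]]]]] | ] /=.
- by have := phi_neq_n hj.
- case: hxy => -[-> ->] /=; first by have := phi_neq_n hj.
  move=> _; split; last by lia.
  by case: hm => -[-> _]; rewrite /phi; case: ifP => h; lia.
case: fl => -[r [_ _ hv1 hv2 ->]] //=; first by lia.
by move=> _; split; [lia | rewrite hv2; lia].
Qed.

Lemma cross_TwA_to_n k c : TwV (k, c) -> TwV (n, c + 1) -> k <> n -> adjb k n ->
  TwA (k, c) (n, c + 1).
Proof.
move=> Px Py kn ad; have [r1 r2] := TwV_residue Px.
move: Py; move/(TwV_offn kn): Px => [p [-> hI]] /TwV_n [q [eq hq]].
have mp := midS_adj_n ad hI; have /midSP mp' := mp.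
have [below | [top gt]] : p <= mid_top n xi - 1 \/ p = mid_top n xi /\ fl = FlatGt.
  case: fl hq => /= hq; last by left; lia.
  have : p <= mid_top n xi - 1 \/ p = mid_top n xi by lia.
  by case=> ?; [left | right].
- have /midSP mp1 : mid_top n xi - (2 * n%:Z - 1) + 1 <= p + 1 /\ p + 1 <= mid_top n xi by lia.
  have [j [i [hG hm]]] := midS_GammaArrow hn mp mp1.
  have ej : j = unphi n k.
    case: (hG) => _ _ hj _; have [t ht] := hatI_parity xi_height hj hI.
    by case: hm => -[ei ej]; case: (unphi_adj_n ad) => e; rewrite e in ht *; lia.
  constructor 2; exists j, p, i, (p + 1); split=> //; left.
  by rewrite ej unphiK //; split; congr pair; lia.
rewrite gt; constructor 3; exists (mid_top n xi); split=> //=.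
- exact/(isMaxMidE xi_height hn).
- by exists (unphi n k), p; rewrite unphiK.
- by move/adjbP: ad; lia.
- by rewrite top.
by rewrite top.
Qed.

Lemma cross_TwA_offn k k' c : TwV (k, c) -> TwV (k', c + 2) -> k <> n -> k' <> n ->
  adjb k k' -> TwA (k, c) (k', c + 2).
Proof.
move=> Px Py kn kn' ad; have [r1 r2] := TwV_residue Px; have [r1' r2'] := TwV_residue Py.
move: Py; move/(TwV_offn kn): Px => [p [-> hI]] /(TwV_offn kn') [p' [ep' hI']].
move/adjbP: ad => ad.
have e1 : p = p' - 1 by lia.
constructor 1; exists (unphi n k), p, (unphi n k'), p'; rewrite !unphiK //.
split=> //; last by congr pair; lia.
- by split=> //; rewrite /unphi; case: ifP => h1; case: ifP => h2; lia.
by rewrite /midpair /unphi; case: ifP => h1; case: ifP => h2; lia.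
Qed.

Lemma cross_TwA x y : TwV x -> TwV y -> x.1 <> n -> cross_arrow n x y -> TwA x y.
Proof.
case: x y => [k c] [k' c'] Px Py /= kn [/= ad ec']; subst c'.
case: (k' =P n) => [ek' | kn'].
  by subst k'; rewrite level_gap_to_n // in Py *; exact: cross_TwA_to_n.
by rewrite level_gap_offn // in Py *; exact: cross_TwA_offn.
Qed.

Lemma cross_down x y : TwV x -> TwV y -> x.1 <> n -> cross_arrow n x y ->
  TwV (down (colstep n) x) -> TwV (down (colstep n) y).
Proof.
case: x y => [k c] [k' c'] Px Py /= kn [/= ad ec']; subst c'; rewrite /down /= colstep_offn //.
move: Py; move/(TwV_offn kn): Px => [p [-> _]] Py /(TwV_offn kn) [p'' [ep'' hI'']].
case: (k' =P n) => [ek' | kn'].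
- subst k'; rewrite level_gap_to_n // colstep_n in Py *; move/TwV_n: Py => [q [eq hq]].
  have /midSP m'' := midS_adj_n ad hI''.
  by apply/TwV_n; exists (q - 1); have := flat_shift01 fl; lia.
rewrite level_gap_offn // colstep_offn // in Py *; move/(TwV_offn kn'): Py => [p' [ep' hI']].
apply/(TwV_offn kn'); exists (p' - 2); split; first by lia.
rewrite (_ : p'' = p' - 3) in hI''; last by lia.
apply: (hatI_down_adjacent xi_height hI' _ hI''); move/adjbP: ad => ad.
by rewrite /unphi; case: ifP => h1; case: ifP => h2; lia.
Qed.

End TwistedArrows.

(* [cross_arrow] after relabelling: the arrows of the sets 2, 3 and 4 *)
Definition relab_cross_shape (n : nat) (v w : vtx) : Prop :=
  (v.1 <= n.-1)%N /\ (w.1 <= n.-1)%N /\ (v.1 = w.1.+1 \/ w.1 = v.1.+1) /\ w.2 = v.2 + 2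
  \/ v.1 = n.-1 /\ w.1 = n /\ w.2 = v.2 + 1
  \/ v.1 = n /\ w.1 = n.-1 /\ w.2 = v.2 + 3.

Section Relabelling.
Variables (n : nat) (xi : nat -> int) (fl : flat).
Hypothesis xi_height : height_fun n xi.
Hypothesis hn : (2 <= n)%N.

Local Notation TwV := (TwV n xi fl).
Local Notation TwV_residue := (TwV_residue xi_height hn).

Lemma relab_fst_n x : (relab n x).1 = n <-> x.1 = n.
Proof. by rewrite /relab /=; case: leqP => h; split; lia. Qed.

Lemma relab_down x y : TwV x -> TwV y ->
  ((relab n y).1 = (relab n x).1 /\ (relab n y).2 = (relab n x).2 - 2 * rB n (relab n x).1) <->
  y = down (colstep n) x.
Proof.
case: x y => [k c] [k' c'] Px Py; have [r1 r2] := TwV_residue Px.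
rewrite -(colstep_rB (x := (k, c)) hn) //; split=> [[e1 e2] | ->] //.
have {}e2 : c' = c - colstep n k := e2.
have kk : k' = k.
  case: (k =P n) => [ek | kn].
    by subst k; apply/(relab_fst_n (k', c')); rewrite e1; apply/(relab_fst_n (n, c)).
  by apply: (relab_residue_eq xi_height hn Py Px e1); exists (-1); rewrite e2 colstep_offn //; lia.
by rewrite /down /= kk e2.
Qed.

Lemma cross_relab x y : TwV x -> TwV y -> cross_arrow n x y ->
  relab_cross_shape n (relab n x) (relab n y).
Proof.
case: x y => [k c] [k' c'] Px Py [/= /adjbP ad ->].
have [r1 r2] := TwV_residue Px; have [r1' r2'] := TwV_residue Py.
rewrite /relab_cross_shape /relab /level_gap /=.
by case: (k =P n) => kn; case: (k' =P n) => kn' /=; case: (leqP k n) => h;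
  case: (leqP k' n) => h'; case: ad => /eqP ad; lia.
Qed.

Lemma relab_cross x y : TwV x -> TwV y -> relab_cross_shape n (relab n x) (relab n y) ->
  cross_arrow n x y.
Proof.
case: x y => [k c] [k' c'] Px Py.
have [r1 r2] := TwV_residue Px; have [r1' r2'] := TwV_residue Py.
have [t [sides sides']] : exists t : int,
    ((k < n)%N -> (n < k')%N -> c - c' = 2 * (k%:Z - k'%:Z + 1) + 4 * t) /\
    ((k' < n)%N -> (n < k)%N -> c' - c = 2 * (k'%:Z - k%:Z + 1) + 4 * t).
  case: (ltnP k n) => h1.
    case: (ltnP n k') => h2; last by exists 0; split=> //; lia.
    by have [t ht] := TwV_sides xi_height hn Px Py h1 h2; exists t; split=> //; lia.
  case: (ltnP k' n) => h3; last by exists 0; split=> //; lia.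
  case: (ltnP n k) => h4; last by exists 0; split=> //; lia.
  by have [t ht] := TwV_sides xi_height hn Py Px h3 h4; exists t; split=> //; lia.
rewrite /relab_cross_shape /relab /cross_arrow /level_gap /=.
by case: (k =P n) => kn; case: (k' =P n) => kn' /=; case: (leqP k n) => h;
  case: (leqP k' n) => h' shape; (split; [apply/adjbP|]); lia.
Qed.

End Relabelling.

Section ExchangeQuiverOfUpsilon.
Variables (n : nat) (xi : nat -> int) (fl : flat) (L : seq vtx).
Hypothesis xi_height : height_fun n xi.
Hypothesis hn : (2 <= n)%N.
Hypothesis L_listing : IsListing n xi fl L.

Local Notation TwV := (TwV n xi fl).
Local Notation down := (down (colstep n)).

Let listing_TwV : listing TwV L := L_listing.
Let column_gap := TwV_column_gap xi_height hn (fl := fl).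
Let column_down := TwV_column_down xi_height hn (fl := fl).
Let adjacent_levels := TwV_adjacent_levels xi_height hn (fl := fl).

Lemma QB_TwV v w : QB n L v w <->
  exists x y, [/\ TwV x, TwV y, relab n x = v, relab n y = w &
                  y = down x \/ cross_arrow n x y /\ TwV (down y)].
Proof.
rewrite (QBP listing_TwV (colstep_gt0 n) column_gap column_down adjacent_levels).
by split=> -[x [y [Px Py ev ew har]]]; exists x, y; split=> //;
  apply/(exchange_arrowE xi_height hn).
Qed.

Lemma Ibar_e_relab x : TwV x -> Ibar_e n L (relab n x) <-> TwV (down x).
Proof.
move=> Px; rewrite (Ibar_eP listing_TwV (colstep_gt0 n) column_gap column_down).
split=> [[x' [Px' Pdx' e]] | Pdx]; last by exists x.
by rewrite -(relab_TwV_inj xi_height hn Px' Px e).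
Qed.

Lemma Ibar_f_relab x : TwV x -> Ibar_f n L (relab n x) <-> ~ TwV (down x).
Proof.
move=> Px; rewrite (Ibar_fP listing_TwV (colstep_gt0 n) column_gap column_down).
split=> [[x' [Px' Pdx' e]] | Pdx]; last by exists x.
by rewrite -(relab_TwV_inj xi_height hn Px' Px e).
Qed.

Lemma explicit_cross_shape v w : Ibar n xi fl v -> Ibar_e n L w ->
  relab_cross_shape n v w <->
  [\/ arr2 n L xi fl v w, arr3 n L xi fl v w | arrB3 n L xi fl v w].
Proof.
case: v w => [a b] [a' b'] hv hw; rewrite /relab_cross_shape /=; split.
  case=> [[h1 [h2 [h3 h4]]] | [[h1 [h2 h3]] | [h1 [h2 h3]]]];
    [constructor 1 | constructor 2 | constructor 3]; split=> //; by rewrite ?h2 ?h3.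
by case=> [[[h1 h2] h3 h4 _ _] | [h1 [-> ->] _ _] | [h1 [-> ->] _ _]];
  [left | right; left | right; right].
Qed.

Lemma QB_explicit v w : QB n L v w <-> ExplicitArrows n L xi fl v w.
Proof.
rewrite QB_TwV; split.
  case=> x [y [Px Py <- <- [ey | [hc Pdy]]]].
    have [e1 e2] := (relab_down xi_height hn Px Py).2 ey.
    by constructor 1; split=> //; [exists x | exists y].
  have hv : Ibar n xi fl (relab n x) by exists x.
  have hw : Ibar_e n L (relab n y) by apply/Ibar_e_relab.
  case/(explicit_cross_shape hv hw): (cross_relab xi_height hn Px Py hc) => h;
    by [constructor 2 | constructor 3 | constructor 4].
case=> [[e1 e2 [x [Px ev]] [y [Py ew]]] | h | h | h].
  exists x, y; split=> //; left; apply/(relab_down xi_height hn Px Py).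
  by rewrite ev ew.
all: have [Iv Iw] : Ibar n xi fl v /\ Ibar_e n L w by case: h.
all: have /(explicit_cross_shape Iv Iw) shape :
  [\/ arr2 n L xi fl v w, arr3 n L xi fl v w | arrB3 n L xi fl v w]
  by [constructor 1 | constructor 2 | constructor 3].
all: move: Iv Iw => [x [Px ev]] /(Ibar_eP listing_TwV (colstep_gt0 n) column_gap column_down).
all: case=> y [Py Pdy ew]; exists x, y; split=> //; right; split=> //.
all: by apply: (relab_cross xi_height hn Px Py); rewrite ev ew.
Qed.

Lemma QB_modified v w : QB n L v w <-> ModifiedArrows n L xi fl v w.
Proof.
split=> [hQ | [hX nff]].
  case/QB_TwV: hQ => x [y [Px Py <- <- har]]; split; last first.
    case=> /(Ibar_f_relab Px) nx /(Ibar_f_relab Py) ny.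
    by case: har => [ey | [_ Pdy]]; [apply: nx; rewrite -ey | exact: ny].
  have Ix : Ibar n xi fl (relab n x) by exists x.
  have Iy : Ibar n xi fl (relab n y) by exists y.
  case: har => [ey | [hc Pdy]].
    have [e1 e2] := (relab_down xi_height hn Px Py).2 ey.
    left; split; first by right.
    by case=> _ e3; move: e2; rewrite e3 /rB /=; case: ifP => _; lia.
  have shape := cross_relab xi_height hn Px Py hc.
  case: (x.1 =P n) => [xn | xn].
    have/(relab_fst_n hn) vn := xn; right; split=> //; last exact/Ibar_e_relab.
    move: shape; rewrite /relab_cross_shape vn; case: (relab n y) => a b /=.
    by case=> [[] | [[]| [_ [-> ->]]]] //; lia.
  left; split; first by left; exists x, y; split=> //; exact: cross_TwA.
  by case=> /(relab_fst_n hn).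
case: hX => [[[hU | hB1] nB2] | hB3]; last by apply/QB_explicit; constructor 4.
  move: nB2 nff; case: hU => x [y [hT <- <-]] nB2 nff; have [Px Py] := TwA_vertices hT.
  case: (x.1 =P n) => [xn | xn].
    have [hy1 hy2] := TwA_from_n hn hT xn.
    case: nB2; split; first exact/(relab_fst_n hn).
    by rewrite /relab /= hy2; congr pair; case: hy1 => ->; case: leqP; lia.
  have hc := TwA_cross hn hT xn.
  apply/QB_TwV; exists x, y; split=> //; right; split=> //.
  apply: NNPP => nPdy; apply: nff; split; last exact/(Ibar_f_relab Py).
  by apply/(Ibar_f_relab Px) => Pdx; apply: nPdy (cross_down xi_height hn Px Py xn hc Pdx).
by apply/QB_explicit; constructor 1.
Qed.

End ExchangeQuiverOfUpsilon.

Lemma listing_exists (P : vtx -> Prop) (s : seq vtx) :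
  (forall x, P x -> x \in s) -> exists L, listing P L.
Proof.
move=> sP; pose b x : bool := if excluded_middle_informative (P x) then true else false.
have bP x : b x <-> P x by rewrite /b; case: excluded_middle_informative.
exists (sort (fun a b : vtx => b.2 <= a.2) (undup [seq x <- s | b x])); split.
- by rewrite sort_uniq undup_uniq.
- move=> x; rewrite mem_sort mem_undup mem_filter.
  by split=> [/andP [/bP] | Px] //; apply/andP; split; [apply/bP | apply: sP].
by apply: sort_sorted => x y; apply: le_total.
Qed.

Section Finiteness.
Variables (n : nat) (xi : nat -> int) (fl : flat).
Hypothesis xi_height : height_fun n xi.
Hypothesis hn : (2 <= n)%N.

Lemma TwV_bounded k c : TwV n xi fl (k, c) ->
  [/\ (k < 2 * n)%N, 2 * xi 1%N - 10 * n%:Z <= c & c <= 2 * xi 1%N + 10 * n%:Z].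
Proof.
move=> Px; have [r1 r2] := TwV_residue xi_height hn Px; split; first by lia.
all: move: Px; rewrite TwVE //.
all: case=> [[kn [p [-> /hatIP [a1 a2 _ a4 a5]]]] | [_ [q [-> [q1 q2]]]]].
all: try (have [_ ? ?] := height_from1 xi_height a1 a2;
  have [_ ? ?] := @height_from1 n xi xi_height (2 * n - 1 - unphi n k)%N ltac:(lia) ltac:(lia);
  lia).
all: have := flat_shift01 fl; have := mid_top_cases xi_height hn.
all: have [_ ? ?] := @height_from1 n xi xi_height n ltac:(lia) ltac:(lia).
all: by have [_ ? ?] := @height_from1 n xi xi_height n.-1 ltac:(lia) ltac:(lia); lia.
Qed.

Lemma TwV_finite : exists s : seq vtx, forall x, TwV n xi fl x -> x \in s.
Proof.
exists [seq (k, c) | k <- iota 0 (2 * n),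
                     c <- [seq 2 * xi 1%N - 10 * n%:Z + j%:Z | j <- iota 0 (20 * n + 1)]].
case=> k c /TwV_bounded [hk lo hi]; apply: allpairs_f; first by rewrite mem_iota; lia.
apply/mapP; exists (absz (c - (2 * xi 1%N - 10 * n%:Z))%R); last by lia.
by rewrite mem_iota; lia.
Qed.

End Finiteness.

Unset Implicit Arguments.

Theorem proposition6p1 (n : nat) (hn : (2 <= n)%N)
  (xi : nat -> int) (orient : nat -> bool)
  (hxi : forall i : nat, (1 <= i)%N -> (i < 2 * n - 2)%N ->
           if orient i then xi i.+1 = xi i + 1 else xi i = xi i.+1 + 1)
  (fl : flat) :
  (exists L : seq vtx, IsListing n xi fl L) /\
  forall L : seq vtx, IsListing n xi fl L ->
    forall v w : vtx,
      (QB n L v w <-> ModifiedArrows n L xi fl v w) /\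
      (QB n L v w <-> ExplicitArrows n L xi fl v w).
Proof.
have xi_height := height_fun_of_orientation hxi.
split; first by have [s sP] := TwV_finite fl xi_height hn; exact: listing_exists sP.
move=> L L_listing v w; split.
- exact: QB_modified.
- exact: QB_explicit.
Qed.
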